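(* Let $\mathcal{G}$ be a hypergraph with at least one edge. Then $$\gamma(\mathcal{G})\ge 1-\frac{\lambda_{\max}(A_{\mathcal{G}})}{\lambda_{\min}(A_{\mathcal{G}})},$$ where $\lambda_{\max}(A_{\mathcal{G}})$ and $\lambda_{\min}(A_{\mathcal{G}})$ are the largest and smallest eigenvalues of $A_{\mathcal{G}}$.
   Context: A hypergraph $\mathcal{G}=(V,E)$ has a finite vertex set $V$ and a set $E$ of subsets of $V$ (edges), each of cardinality at least $2$. Two distinct vertices are adjacent if some edge contains both. The adjacency matrix $A_{\mathcal{G}}$ has $(A_{\mathcal{G}})_{ij}=\sum_{e\in E,\, i,j\in e}\frac{1}{|e|-1}$ for $i\ne j$ and zero diagonal. The strong chromatic number $\gamma(\mathcal{G})$ is the minimum number of colors in a coloring of the vertices in which any two adjacent vertices get different colors. *)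

From HB Require Import structures.
From mathcomp Require Import all_boot all_order all_algebra.
Set Implicit Arguments. Unset Strict Implicit. Unset Printing Implicit Defensive.
Import Order.TTheory GRing.Theory Num.Theory.
Local Open Scope ring_scope.

Definition is_hypergraph (n : nat) (E : {set {set 'I_n}}) : Prop :=
  forall e, e \in E -> (2 <= #|e|)%N.

Definition hadj (n : nat) (E : {set {set 'I_n}}) (i j : 'I_n) : bool :=
  (i != j) && [exists e in E, (i \in e) && (j \in e)].

Definition hadj_matrix (R : fieldType) (n : nat) (E : {set {set 'I_n}}) : 'M[R]_n :=
  \matrix_(i, j) (if i == j then 0
                  else \sum_(e in E | (i \in e) && (j \in e)) ((#|e| - 1)%:R)^-1).

Definition strong_colorable (n : nat) (E : {set {set 'I_n}}) (k : nat) : bool :=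
  [exists c : {ffun 'I_n -> 'I_k},
     [forall i, forall j, hadj E i j ==> (c i != c j)]].

Lemma strong_colorable_n (n : nat) (E : {set {set 'I_n}}) :
  exists k, strong_colorable E k.
Proof.
exists n; apply/existsP; exists [ffun i => i]; apply/forallP => i; apply/forallP => j.
by apply/implyP => /andP[hij _]; rewrite !ffunE.
Qed.

Definition strong_chromatic (n : nat) (E : {set {set 'I_n}}) : nat :=
  ex_minn (strong_colorable_n E).

From HB Require Import structures.
From mathcomp Require Import all_boot all_order all_algebra.
From mathcomp Require Import ring lra complex.
Import Order.TTheory GRing.Theory Num.Theory.
Local Open Scope ring_scope.

(* Let lmin <= ... <= lmax be the spectrum of the symmetric
   matrix A, so that A - lmin I is positive semidefinite.  For a positive
   semidefinite quadratic form Q and vectors y_1, ..., y_k, summing Q(y_j - y_l)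
   >= 0 over all pairs gives Q(y_1 + ... + y_k) <= k (Q(y_1) + ... + Q(y_k)).
   Split an lmax-eigenvector x along the k colour classes of a proper colouring:
   no two vertices of a class are adjacent, so A vanishes on each class and
   Q(y_j) = -lmin |y_j|^2, while Q(x) = (lmax - lmin) |x|^2.  Hence
   (lmax - lmin) |x|^2 <= -k lmin |x|^2, which is the bound once lmin < 0; and
   lmin < 0 because an edge yields a positive entry in a matrix with zero
   diagonal. *)

Section HermitianForm.
Local Open Scope sesquilinear_scope.
Context {C : numClosedFieldType} {n : nat} {A : 'M[C]_n}.
Hypothesis hermA : A \is hermsymmx.

Let P := spectralmx A.
Let d := spectral_diag A.

Let P_unitary : P \is unitarymx := spectral_unitarymx A.

Lemma hermitian_spectral_decomposition : A = P^t* *m diag_mx d *m P.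
Proof.
rewrite -invmx_unitary //.
exact/orthomx_spectralP/hermitian_normalmx.
Qed.

Lemma eigenvalue_spectral_diag i : eigenvalue A (d 0 i).
Proof.
apply/eigenvalueP; exists (row i P).
  have -> : row i P *m A = row i (diag_mx d *m P).
    rewrite -row_mul {1}hermitian_spectral_decomposition !mulmxA.
    by rewrite (unitarymxP P_unitary) mul1mx.
  by apply/rowP => j; rewrite mul_diag_mx !mxE.
apply/eqP => /(congr1 (fun u => u *m P^t*)).
rewrite -row_mul (unitarymxP P_unitary) mul0mx.
by move/rowP/(_ i); rewrite !mxE eqxx /= => /eqP; rewrite oner_eq0.
Qed.

Lemma hermitian_form_ge_eigenvalue_lb (m : C) :
  (forall a, a \is Num.real -> eigenvalue A a -> m <= a) ->
  forall v : 'rV_n, m * (v *m v^t*) 0 0 <= (v *m A *m v^t*) 0 0.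
Proof.
move=> hm v; pose w := v *m P^t*.
have wC : w^t* = P *m v^t* by rewrite /w trmx_mul map_mxM trmxCK.
have -> : v *m A *m v^t* = w *m diag_mx d *m w^t*.
  by rewrite wC {1}hermitian_spectral_decomposition /w !mulmxA.
have -> : v *m v^t* = w *m w^t*.
  by rewrite wC /w -invmx_unitary // !mulmxA mulmxKV ?unitarymx_unit.
rewrite !mxE mulr_sumr; apply: ler_sum => i _.
rewrite mul_mx_diag !mxE mulrAC mulrC ler_wpM2l ?mul_conjC_ge0 //.
apply: hm (eigenvalue_spectral_diag i).
exact: mxOverP (hermitian_spectral_diag_real hermA) 0 i.
Qed.

End HermitianForm.

Definition psdmx {R : numDomainType} {n} (B : 'M[R]_n) : Prop :=
  forall v : 'rV_n, 0 <= (v *m B *m v^T) 0 0.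

(* The spectral theorem is only available over a numClosedFieldType, hence the
   detour through [complex R]. *)
Section RealSymmetric.
Local Open Scope sesquilinear_scope.
Context {R : rcfType} {n : nat}.
Local Notation toC := (real_complex R).

Lemma trmxC_map_complex p q (M : 'M[R]_(p, q)) :
  (map_mx toC M)^t* = map_mx toC M^T.
Proof. by apply/matrixP => i j; rewrite !mxE conj_Creal // complex_real. Qed.

Lemma eigenvalue_map_complex (A : 'M[R]_n) a :
  eigenvalue (map_mx toC A) (toC a) = eigenvalue A a.
Proof. by rewrite !eigenvalue_root_char -map_char_poly fmorph_root. Qed.

Lemma psdmx_sub_eigenvalue_lb (A : 'M[R]_n) (m : R) :
  A^T = A -> (forall a, eigenvalue A a -> m <= a) -> psdmx (A - m%:M).
Proof.
move=> symA hm v; pose Ac := map_mx toC A.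
have hermAc : Ac \is hermsymmx.
  by apply/is_hermitianmxP; rewrite expr0 scale1r trmxC_map_complex symA.
have hmC a : a \is Num.real -> eigenvalue Ac a -> toC m <= a.
  move=> /RRe_real <-; rewrite eigenvalue_map_complex lecR; exact: hm.
rewrite mulmxBr mul_mx_scalar mulmxBl -scalemxAl.
set N := v *m v^T; set Q := v *m A *m v^T.
rewrite (_ : (Q - m *: N) 0 0 = Q 0 0 - m * N 0 0) ?subr_ge0; last first.
  by rewrite !mxE.
have := hermitian_form_ge_eigenvalue_lb hermAc _ hmC (map_mx toC v).
by rewrite trmxC_map_complex -!map_mxM !mxE -rmorphM lecR.
Qed.

End RealSymmetric.

Section FormSums.
Context {R : comNzRingType} {n k : nat} (B : 'M[R]_n) (y : 'I_k -> 'rV[R]_n).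

Lemma sum_form_pairwise_diff :
  \sum_j \sum_l (y j - y l) *m B *m (y j - y l)^T
  = (\sum_j y j *m B *m (y j)^T) *+ (2 * k)
    - (\sum_j y j) *m B *m (\sum_j y j)^T *+ 2.
Proof.
have cross : \sum_j \sum_l y j *m B *m (y l)^T
              = (\sum_j y j) *m B *m (\sum_j y j)^T.
  rewrite (raddf_sum (@trmx R 1 n)) !mulmx_suml; apply: eq_bigr => j _.
  by rewrite (mulmx_sumr (y j *m B)).
have diag : \sum_(j : 'I_k) \sum_(l : 'I_k) y j *m B *m (y j)^T
            = (\sum_j y j *m B *m (y j)^T) *+ k.
  by rewrite -sumrMnl; apply: eq_bigr => j _; rewrite sumr_const card_ord.
under eq_bigr do under eq_bigr do rewrite linearB /= !mulmxBl !mulmxBr.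
under eq_bigr do rewrite !sumrB.
rewrite !sumrB cross [X in _ - (X - _)]exchange_big /= cross.
rewrite [X in _ - (_ - X)]exchange_big /= diag.
by rewrite opprB -mulr2n mulrnBl -mulrnA mulnC.
Qed.

End FormSums.

Lemma psdmx_form_sum_le {R : numDomainType} {n k : nat} (B : 'M[R]_n)
    (y : 'I_k -> 'rV[R]_n) :
  psdmx B ->
  ((\sum_j y j) *m B *m (\sum_j y j)^T) 0 0
    <= k%:R * \sum_j (y j *m B *m (y j)^T) 0 0.
Proof.
move=> psdB.
have : 0 <= (\sum_j \sum_l (y j - y l) *m B *m (y j - y l)^T) 0 0.
  by rewrite summxE; apply: sumr_ge0 => j _; rewrite summxE; apply: sumr_ge0.
rewrite sum_form_pairwise_diff -summxE.
set S := (\sum_j y j) *m B *m _; set T := \sum_j y j *m B *m _.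
rewrite mxE [X in _ + X]mxE !mulmxnE subr_ge0 mulr_natl mulnC mulrnA.
by rewrite lerMn2r.
Qed.

Section ClassProjection.
Context {R : pzRingType} {n k : nat} (c : 'I_n -> 'I_k).

Definition class_proj (j : 'I_k) : 'M[R]_n := diag_mx (\row_a (c a == j)%:R).

Lemma sum_class_proj : \sum_j class_proj j = 1%:M.
Proof.
apply/matrixP => a b; rewrite summxE !mxE.
under eq_bigr do rewrite !mxE.
case: eqP => [->|_] /=; last by rewrite big1 // => j _; rewrite mulr0n.
rewrite (bigD1 (c b)) //= eqxx big1 ?addr0 // => j /negPf.
by rewrite eq_sym => ->.
Qed.

Lemma class_proj_idem j : class_proj j *m class_proj j = class_proj j.
Proof.
rewrite mulmx_diag; congr diag_mx; apply/rowP => a.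
by rewrite !mxE; case: eqP; rewrite ?mulr1 ?mulr0.
Qed.

Lemma tr_class_proj j : (class_proj j)^T = class_proj j.
Proof. exact: tr_diag_mx. Qed.

Lemma class_proj_mul_proj_eq0 (A : 'M[R]_n) j :
  (forall a b, c a = c b -> A a b = 0) -> class_proj j *m A *m class_proj j = 0.
Proof.
move=> hA; apply/matrixP => a b.
rewrite /class_proj mul_mx_diag mxE mul_diag_mx !mxE.
case: eqP => [ca|_]; last by rewrite !mul0r.
case: eqP => [cb|_]; last by rewrite mulr0.
by rewrite hA ?(mulr0, mul0r) // ca cb.
Qed.

End ClassProjection.

Lemma mulmx_tr_self_gt0 {R : realDomainType} {n : nat} (x : 'rV[R]_n) :
  x != 0 -> 0 < (x *m x^T) 0 0.
Proof.
move=> x_neq0.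
have sq_ge0 a : 0 <= x 0 a * x^T a 0 by rewrite mxE -expr2 sqr_ge0.
rewrite mxE lt_def sumr_ge0 // andbT; apply: contra x_neq0 => /eqP sum0.
apply/eqP/rowP => a.
have /eqP := @psumr_eq0P _ _ _ _ (fun a _ => sq_ge0 a) sum0 a isT.
by rewrite !mxE mulf_eq0 orbb => /eqP.
Qed.

Lemma hoffman_bound {R : rcfType} {n k : nat} (A : 'M[R]_n) (c : 'I_n -> 'I_k)
    (lmax lmin : R) (x : 'rV[R]_n) :
  A^T = A -> (forall a, eigenvalue A a -> lmin <= a) -> lmin < 0 ->
  x != 0 -> x *m A = lmax *: x ->
  (forall a b, c a = c b -> A a b = 0) ->
  1 - lmax / lmin <= k%:R.
Proof.
move=> symA lminP lmin_lt0 x_neq0 xA cA.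
pose D := @class_proj R n k c; pose y j := x *m D j; pose N := (x *m x^T) 0 0.
have N_gt0 : 0 < N := mulmx_tr_self_gt0 x x_neq0.
have sum_y : \sum_j y j = x by rewrite -mulmx_sumr sum_class_proj mulmx1.
have form_y j :
    (y j *m (A - lmin%:M) *m (y j)^T) 0 0 = - lmin * (x *m D j *m x^T) 0 0.
  have -> : y j *m (A - lmin%:M) *m (y j)^T
            = x *m (D j *m (A - lmin%:M) *m D j) *m x^T.
    by rewrite /y trmx_mul tr_class_proj !mulmxA.
  rewrite mulmxBr mulmxBl class_proj_mul_proj_eq0 // mul_mx_scalar -scalemxAl.
  rewrite class_proj_idem sub0r mulmxN mulNmx -scalemxAr -scalemxAl.
  by rewrite mxE [in LHS]mxE mulNr.
have form_x : (x *m (A - lmin%:M) *m x^T) 0 0 = (lmax - lmin) * N.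
  by rewrite mulmxBr xA mul_mx_scalar -scalerBl -scalemxAl mxE.
have := psdmx_form_sum_le _ y (psdmx_sub_eigenvalue_lb _ _ symA lminP).
rewrite sum_y form_x (eq_bigr _ (fun j _ => form_y j)) -mulr_sumr -summxE.
rewrite -mulmx_suml -mulmx_sumr sum_class_proj mulmx1 -/N.
rewrite mulrCA mulrA ler_pM2r // => bound.
have -> : 1 - lmax / lmin = (lmax - lmin) / - lmin by field; rewrite lt_eqF.
by rewrite ler_pdivrMr ?oppr_gt0 // mulrC.
Qed.

Lemma delta_sub_form {R : pzRingType} {n : nat} (M : 'M[R]_n) (i j : 'I_n) :
  let v : 'rV[R]_n := delta_mx 0 i - delta_mx 0 j in
  (v *m M *m v^T) 0 0 = M i i - M i j - (M j i - M j j).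
Proof.
move=> v; rewrite [v^T]linearB /= !trmx_delta.
by rewrite !mulmxBl !mulmxBr -!rowE -!colE !mxE.
Qed.

Lemma zero_diag_eigenvalue_lb_lt0 {R : rcfType} {n : nat} (A : 'M[R]_n) (m : R)
    i j :
  A^T = A -> (forall a, A a a = 0) -> 0 < A i j ->
  (forall a, eigenvalue A a -> m <= a) -> m < 0.
Proof.
move=> symA diag0 Aij_gt0 mP.
have ij : i != j by apply: contraTneq Aij_gt0 => ->; rewrite diag0 ltxx.
have Aji : A j i = A i j by rewrite -[in LHS]symA mxE.
have := psdmx_sub_eigenvalue_lb _ _ symA mP (delta_mx 0 i - delta_mx 0 j).
rewrite delta_sub_form !mxE !diag0 Aji (negbTE ij) eq_sym (negbTE ij).
rewrite !eqxx !mulr0n !mulr1n.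
lra.
Qed.

Section HypergraphAdjacency.
Context {n : nat} (E : {set {set 'I_n}}).

Lemma tr_hadj_matrix (R : fieldType) : (hadj_matrix R E)^T = hadj_matrix R E.
Proof.
apply/matrixP => i j; rewrite !mxE eq_sym; case: eqP => // _.
by apply: eq_bigl => e; rewrite [(j \in e) && _]andbC.
Qed.

Lemma hadj_matrix_diag (R : fieldType) i : hadj_matrix R E i i = 0.
Proof. by rewrite mxE eqxx. Qed.

Lemma hadj_matrix_nonadj (R : fieldType) i j :
  ~~ hadj E i j -> hadj_matrix R E i j = 0.
Proof.
rewrite /hadj mxE negb_and negbK => /orP[/eqP-> |]; first by rewrite eqxx.
move=> /existsPn noedge; case: eqP => // _; apply: big1 => e /andP[eE ije].
by have := noedge e; rewrite eE ije.
Qed.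

Lemma hadj_matrix_gt0 (R : numFieldType) e i j : is_hypergraph E ->
  e \in E -> i \in e -> j \in e -> i != j -> 0 < hadj_matrix R E i j.
Proof.
move=> hE eE ie je ij.
rewrite mxE (negbTE ij) (bigD1 e) /=; last by rewrite eE ie je.
apply: ltr_wpDr; first by apply: sumr_ge0 => f _; rewrite invr_ge0 ler0n.
by rewrite invr_gt0 ltr0n subn_gt0 hE.
Qed.

End HypergraphAdjacency.

Theorem theorem4 (R : rcfType) (n : nat) (E : {set {set 'I_n}})
  (hE : is_hypergraph E) (hne : E != set0)
  (lmax lmin : R)
  (hmax : eigenvalue (hadj_matrix R E) lmax)
  (hmin : eigenvalue (hadj_matrix R E) lmin)
  (hbounds : forall a : R, eigenvalue (hadj_matrix R E) a -> lmin <= a <= lmax) :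
  1 - lmax / lmin <= (strong_chromatic E)%:R.
Proof.
have symA := tr_hadj_matrix E R.
have lminP a (ha : eigenvalue (hadj_matrix R E) a) : lmin <= a.
  by have /andP[] := hbounds a ha.
have lmin_lt0 : lmin < 0.
  have [e eE] := set0Pn _ hne; have /card_gt1P[i [j [ie je ij]]] := hE e eE.
  apply: (zero_diag_eigenvalue_lb_lt0 _ _ i j symA (hadj_matrix_diag E R) _
            lminP).
  exact: hadj_matrix_gt0 hE eE ie je ij.
have [x xA x_neq0] := eigenvalueP hmax.
rewrite /strong_chromatic; case: ex_minnP => k /existsP[c /forallP proper] _.
apply: (hoffman_bound _ c _ _ x symA lminP lmin_lt0 x_neq0 xA) => a b cab.
apply: hadj_matrix_nonadj; apply: contraL (implyP (forallP (proper a) b)) _.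
exact/eqP.
Qed.
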